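(* Let $p\ge1$ be an integer and consider the hybrid system (2.2) associated with a consistent Runge–Kutta scheme of order $p$ for $\dot z=f(z)$ with continuous step bound $\varphi:\mathbb{R}^n\to(0,+\infty)$. Suppose: (i) there exist a Lyapunov function $V\in C^1(\mathbb{R}^n;\mathbb{R}^+)$ for $\dot z=f(z)$ and a continuous positive definite $\tilde W:\mathbb{R}^n\to\mathbb{R}^+$ such that $V(z(h,x))\le V(x)-h\tilde W(x)$ for all $x\in\mathbb{R}^n$ and $h\in[0,\varphi(x)]$; (ii) there exists $b\ge0$ with $|z(h,x)|\le\exp(b)|x|$ and $|x+hF(h,x)|\le\exp(b)|x|$ for all $x$ and $h\in[0,\varphi(x)]$; (iii) there is a continuous positive definite $C:\mathbb{R}^n\to\mathbb{R}^+$ with $|z(h,x)-x-hF(h,x)|\le C(x)h^{p+1}$ for all $x$ and $h\in[0,\varphi(x)]$, and a constant $\lambda\in(0,1)$ such that $$\varphi(x)\le\Big(\frac{(1-\lambda)\tilde W(x)}{l_V^b(x)C(x)}\Big)^{1/p}\quad\forall x\ne0,$$ where $l_V^b(x):=\max\{|\nabla V(z)|:|z|\le\exp(b)|x|\}$. Then $0\in\mathbb{R}^n$ is URGAS for (2.2). If moreover there exist $\sigma,K>0$ with $\tilde W(x)\ge2\sigma V(x)$ and $V(x)\ge K|x|^2$ for all $x$, then $0$ is robustly K-exponentially stable for (2.2).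
   Context: Standing framework: $f$ locally Lipschitz with $f(0)=0$; $z(t,x)$ is the solution of $\dot z=f(z)$ with $z(0)=x$. A consistent $s$-stage Runge–Kutta scheme has coefficients $a_{ij},b_i$ with $\sum_ib_i=1$ and is represented by $F(h,x):=\sum_{i=1}^sb_if(Y_i)$ where $Y_i=x+h\sum_{j=1}^sa_{ij}f(Y_j)$; the continuous step bound $\varphi$ is assumed small enough that these equations have a unique solution for all $h\in[0,\varphi(x)]$ and that $|F(h,x)|\le|x|M(|x|)$ for some continuous nondecreasing $M$. The hybrid system (2.2): for each locally bounded $u:\mathbb{R}^+\to\mathbb{R}^+$ and $x_0$, $\tau_0=0$, $x(0)=x_0$, $h_i=\varphi(x(\tau_i))\exp(-u(\tau_i))$, $\tau_{i+1}=\tau_i+h_i$, $x(t)=x(\tau_i)+(t-\tau_i)F(h_i,x(\tau_i))$ on $[\tau_i,\tau_{i+1}]$; solution $x(t,x_0;u)$. URGAS: (a) for every $\varepsilon>0$ there is $\delta>0$ with $|x_0|<\delta\Rightarrow|x(t,x_0;u)|<\varepsilon$ for all $t\ge0$, all $u$; (b) for every $R$, $\sup\{|x(t,x_0;u)|:t\ge0,|x_0|\le R,u\}<\infty$; (c) for all $\varepsilon,R$ there is $T$ with $|x(t,x_0;u)|\le\varepsilon$ for $t\ge T$, $|x_0|\le R$, all locally bounded $u\ge0$. Robustly K-exponentially stable: there exist $a\in K_\infty$, $\sigma>0$ with $|x(t,x_0;u)|\le e^{-\sigma t}a(|x_0|)$ for all $t,x_0,u$. A Lyapunov function for $\dot z=f(z)$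 is a positive definite, radially unbounded $C^1$ function $V$ with $\nabla V(x)f(x)<0$ for $x\ne0$. *)

From Stdlib Require Import Reals.
From mathcomp Require Import ssreflect ssrfun ssrbool eqtype ssrnat seq fintype bigop.
Set Implicit Arguments.
Unset Strict Implicit.
Open Scope R_scope.

Definition vec (n : nat) := 'I_n -> R.
Definition vzero {n} : vec n := fun _ => 0.
Definition vadd {n} (x y : vec n) : vec n := fun i => x i + y i.
Definition vsub {n} (x y : vec n) : vec n := fun i => x i - y i.
Definition vscale {n} (c : R) (x : vec n) : vec n := fun i => c * x i.
Definition vdot {n} (x y : vec n) : R := \big[Rplus/0]_(i < n) (x i * y i).
Definition vnorm {n} (x : vec n) : R := sqrt (vdot x x).
Definition vlin {n s : nat} (c : 'I_s -> R) (Y : 'I_s -> vec n) : vec n :=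
  fun k => \big[Rplus/0]_(j < s) (c j * Y j k).

Definition vcont {n} (g : vec n -> R) : Prop :=
  forall x eps, 0 < eps -> exists d, 0 < d /\
    forall y, vnorm (vsub y x) < d -> Rabs (g y - g x) < eps.
Definition vcontv {n} (g : vec n -> vec n) : Prop :=
  forall x eps, 0 < eps -> exists d, 0 < d /\
    forall y, vnorm (vsub y x) < d -> vnorm (vsub (g y) (g x)) < eps.
Definition loc_lipschitz {n} (f : vec n -> vec n) : Prop :=
  forall r, 0 < r -> exists L, forall x y, vnorm x <= r -> vnorm y <= r ->
    vnorm (vsub (f x) (f y)) <= L * vnorm (vsub x y).
Definition pos_def {n} (g : vec n -> R) : Prop :=
  g vzero = 0 /\ forall x, x <> vzero -> 0 < g x.
Definition radially_unbounded {n} (g : vec n -> R) : Prop :=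
  forall B, exists r, forall x, r <= vnorm x -> B <= g x.
Definition has_gradient {n} (V : vec n -> R) (gV : vec n -> vec n) : Prop :=
  forall x eps, 0 < eps -> exists d, 0 < d /\
    forall y, vnorm (vsub y x) < d ->
      Rabs (V y - V x - vdot (gV x) (vsub y x)) <= eps * vnorm (vsub y x).
Definition lyapunov {n} (f : vec n -> vec n) (V : vec n -> R) (gV : vec n -> vec n) : Prop :=
  pos_def V /\ radially_unbounded V /\ has_gradient V gV /\ vcontv gV /\
  (forall x, x <> vzero -> vdot (gV x) (f x) < 0).

Definition is_flow {n} (f : vec n -> vec n) (z : R -> vec n -> vec n) : Prop :=
  forall x, z 0 x = x /\
    (forall eps, 0 < eps -> exists d, 0 < d /\
       forall t, 0 <= t < d -> vnorm (vsub (z t x) x) < eps) /\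
    (forall t, 0 < t -> forall i, derivable_pt_lim (fun s => z s x i) t (f (z t x) i)).

Definition cont_nonneg (g : R -> R) : Prop :=
  forall r eps, 0 <= r -> 0 < eps -> exists d, 0 < d /\
    forall s, 0 <= s -> Rabs (s - r) < d -> Rabs (g s - g r) < eps.
Definition nondecr_nonneg (g : R -> R) : Prop :=
  forall r s, 0 <= r -> r <= s -> g r <= g s.
Definition Kinf (a : R -> R) : Prop :=
  a 0 = 0 /\ cont_nonneg a /\
  (forall r s, 0 <= r -> r < s -> a r < a s) /\
  (forall B, exists r, 0 <= r /\ B <= a r).

Definition RK_stages {n s : nat} (f : vec n -> vec n) (a : 'I_s -> 'I_s -> R)
  (h : R) (x : vec n) (Y : 'I_s -> vec n) : Prop :=
  forall i, Y i = vadd x (vscale h (vlin (a i) (fun j => f (Y j)))).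
Definition RK_represents {n s : nat} (f : vec n -> vec n) (a : 'I_s -> 'I_s -> R)
  (b : 'I_s -> R) (phi : vec n -> R) (F : R -> vec n -> vec n) : Prop :=
  forall x h, 0 <= h <= phi x ->
    exists Y, RK_stages f a h x Y /\
      (forall Y', RK_stages f a h x Y' -> Y' = Y) /\
      F h x = vlin b (fun j => f (Y j)).

Definition admissible (u : R -> R) : Prop :=
  (forall t, 0 <= t -> 0 <= u t) /\
  (forall T, 0 <= T -> exists B, forall t, 0 <= t <= T -> u t <= B).

Fixpoint hyb_state {n} (phi : vec n -> R) (F : R -> vec n -> vec n) (u : R -> R)
  (x0 : vec n) (i : nat) : R * vec n :=
  match i with
  | O => (0, x0)
  | S k =>
      let st := hyb_state phi F u x0 k in
      let h := phi (snd st) * exp (- u (fst st)) in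
      (fst st + h, vadd (snd st) (vscale h (F h (snd st))))
  end.
Definition hyb_tau {n} phi F u (x0 : vec n) i := fst (hyb_state phi F u x0 i).
Definition hyb_x {n} phi F u (x0 : vec n) i := snd (hyb_state phi F u x0 i).
Definition hyb_h {n} (phi : vec n -> R) F u x0 i :=
  phi (hyb_x phi F u x0 i) * exp (- u (hyb_tau phi F u x0 i)).
Definition hyb_at {n} (phi : vec n -> R) (F : R -> vec n -> vec n) (u : R -> R)
  (x0 : vec n) (t : R) (y : vec n) : Prop :=
  exists i, hyb_tau phi F u x0 i <= t <= hyb_tau phi F u x0 i + hyb_h phi F u x0 i /\
    y = vadd (hyb_x phi F u x0 i)
             (vscale (t - hyb_tau phi F u x0 i) (F (hyb_h phi F u x0 i) (hyb_x phi F u x0 i))).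

Definition hyb_complete {n} (phi : vec n -> R) (F : R -> vec n -> vec n) : Prop :=
  forall u x0, admissible u -> forall t, 0 <= t -> exists y, hyb_at phi F u x0 t y.

Definition URGAS {n} (phi : vec n -> R) (F : R -> vec n -> vec n) : Prop :=
  (forall eps, 0 < eps -> exists d, 0 < d /\
     forall u x0 t y, admissible u -> vnorm x0 < d -> 0 <= t ->
       hyb_at phi F u x0 t y -> vnorm y < eps) /\
  (forall Rad, exists B, forall u x0 t y, admissible u -> vnorm x0 <= Rad -> 0 <= t ->
       hyb_at phi F u x0 t y -> vnorm y <= B) /\
  (forall eps Rad, 0 < eps -> exists T, forall u x0 t y, admissible u ->
       vnorm x0 <= Rad -> T <= t -> hyb_at phi F u x0 t y -> vnorm y <= eps).

Definition robust_K_exp_stable {n} (phi : vec n -> R) (F : R -> vec n -> vec n) : Prop :=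
  exists (a : R -> R) (sigma : R), Kinf a /\ 0 < sigma /\
    forall u x0 t y, admissible u -> 0 <= t -> hyb_at phi F u x0 t y ->
      vnorm y <= exp (- sigma * t) * a (vnorm x0).

Definition is_lVb {n} (gV : vec n -> vec n) (b : R) (x : vec n) (m : R) : Prop :=
  (exists z, vnorm z <= exp b * vnorm x /\ vnorm (gV z) = m) /\
  (forall z, vnorm z <= exp b * vnorm x -> vnorm (gV z) <= m).

(* The key estimate is a one-step decrease of the
   Lyapunov function along the numerical scheme:
       V(x + hF(h,x)) <= V(x) - lam h W(x)       for h in [0, phi x].
   It comes from the decrease (i) along the exact flow z(h,x), a mean-value bound
   |V(y) - V(y')| <= l_V^b(x) |y - y'| on the ball of radius exp(b)|x| that
   contains both z(h,x) and x + hF(h,x) by (ii), the local error bound (iii), and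
   the step-size restriction phi(x)^p <= (1-lam) W(x) / (l_V^b(x) C(x)).
   Along the hybrid trajectory, V therefore decreases at the grid points tau_i,
   and between grid points the trajectory stays in the ball of radius exp(b)|x(tau_i)|.
   Completeness, uniform stability, boundedness and attractivity then follow from
   compactness arguments (extreme values of continuous functions on closed balls
   and annuli), and exponential stability from the discrete Gronwall estimate
   V(x(tau_i)) <= exp(-2 sigma lam tau_i) V(x0) combined with V >= K|.|^2.

   Of the standing framework only the positivity and the
   continuity of phi enter the argument; the Runge-Kutta structure of F is used
   solely through (ii) and (iii). *)
From HB Require Import structures.
From Stdlib Require Import Reals Lra Lia Classical ClassicalEpsilon FunctionalExtensionality.
From mathcomp Require Import ssreflect ssrfun ssrbool eqtype ssrnat seq fintype bigop.
Open Scope R_scope.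
Set Implicit Arguments.
Unset Strict Implicit.
Set Warnings "-notation-overridden -redundant-canonical-projection".

Lemma Rplus_associative : associative Rplus.
Proof. by move=> x y z; rewrite Rplus_assoc. Qed.
HB.instance Definition _ :=
  Monoid.isComLaw.Build R 0 Rplus Rplus_associative Rplus_comm Rplus_0_l.

Notation "\rsum_ ( i < n ) F" := (\big[Rplus/0]_(i < n) F)
  (at level 41, F at level 41, i, n at level 50).

(** ** Finite sums of reals *)

Lemma rsum_scale n c (F : 'I_n -> R) : \rsum_(i < n) (c * F i) = c * \rsum_(i < n) F i.
Proof. by symmetry; apply: (big_morph (Rmult c) (id1 := 0)) => [x y|]; ring. Qed.

Lemma rsum_le n (F G : 'I_n -> R) : (forall i, F i <= G i) ->
  \rsum_(i < n) F i <= \rsum_(i < n) G i.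
Proof. by move=> H; apply: (big_ind2 (fun a b => a <= b)) => [|*|i _]; [lra|lra|exact: H]. Qed.

Lemma rsum_nonneg n (F : 'I_n -> R) : (forall i, 0 <= F i) -> 0 <= \rsum_(i < n) F i.
Proof. by move=> H; apply: (big_ind (fun a => 0 <= a)) => [|*|i _]; [lra|lra|exact: H]. Qed.

Lemma rsum_const n c : \rsum_(i < n) c = INR n * c.
Proof.
  elim: n => [|n IH]; first by rewrite big_ord0 /=; ring.
  by rewrite big_ord_recr IH S_INR; change (INR n * c + c = (INR n + 1) * c); ring.
Qed.

Lemma rsum_ge_term n (F : 'I_n -> R) j : (forall i, 0 <= F i) -> F j <= \rsum_(i < n) F i.
Proof.
  move=> H; rewrite (bigD1 j) //= -{1}(Rplus_0_r (F j)); apply: Rplus_le_compat_l.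
  by apply: (big_ind (fun a => 0 <= a)) => [|*|i _]; [lra|lra|exact: H].
Qed.

(** ** Euclidean geometry of R^n *)

Lemma vec_ext n (x y : vec n) : (forall i, x i = y i) -> x = y.
Proof. exact: functional_extensionality. Qed.

Lemma vdot_self_nonneg n (x : vec n) : 0 <= vdot x x.
Proof. by apply: rsum_nonneg => i; nra. Qed.

Lemma vnorm_nonneg n (x : vec n) : 0 <= vnorm x.
Proof. exact: sqrt_pos. Qed.

Lemma vnorm_sqr n (x : vec n) : vnorm x * vnorm x = vdot x x.
Proof. by rewrite /vnorm sqrt_sqrt //; exact: vdot_self_nonneg. Qed.

Lemma vdot_scale_r n (x y : vec n) c : vdot x (vscale c y) = c * vdot x y.
Proof. by rewrite /vdot -rsum_scale; apply: eq_bigr => i _; rewrite /vscale; ring. Qed.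

Lemma vdot_expand n (x y : vec n) t :
  vdot (vadd x (vscale t y)) (vadd x (vscale t y)) =
  vdot x x + 2 * t * vdot x y + t * t * vdot y y.
Proof.
  rewrite /vdot -!rsum_scale -!big_split /=.
  by apply: eq_bigr => i _; rewrite /vadd /vscale; ring.
Qed.

(** Cauchy-Schwarz, from the nonnegativity of the quadratic t |-> |x + t y|^2. *)
Lemma cauchy_schwarz n (x y : vec n) : Rabs (vdot x y) <= vnorm x * vnorm y.
Proof.
  set A := vdot x x; set B := vdot y y; set D := vdot x y.
  have HA : 0 <= A by exact: vdot_self_nonneg.
  have HB : 0 <= B by exact: vdot_self_nonneg.
  have Hq t : 0 <= A + 2 * t * D + t * t * B.
  { by rewrite /A /B /D -vdot_expand; exact: vdot_self_nonneg. }
  have HD : D * D <= A * B.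
  { case: (Req_dec B 0) => HB0.
    - case: (Req_dec D 0) => HD0; first by rewrite HD0 HB0; lra.
      have := Hq (- (A + 1) / (2 * D)); rewrite HB0.
      have -> : A + 2 * (- (A + 1) / (2 * D)) * D
                + - (A + 1) / (2 * D) * (- (A + 1) / (2 * D)) * 0 = -1 by field.
      lra.
    - have := Hq (- D / B).
      have -> : A + 2 * (- D / B) * D + - D / B * (- D / B) * B = A - D * D / B
        by field; lra.
      move=> H; have : D * D / B * B <= A * B by apply: Rmult_le_compat_r; lra.
      by have -> : D * D / B * B = D * D by field; lra. }
  rewrite /vnorm -sqrt_mult // -(sqrt_Rsqr (Rabs D)); last exact: Rabs_pos.
  by apply: sqrt_le_1_alt; rewrite /Rsqr -Rabs_mult Rabs_pos_eq; [exact: HD | nra].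
Qed.

Lemma vnorm_triangle n (x y : vec n) : vnorm (vadd x y) <= vnorm x + vnorm y.
Proof.
  have Hxy : vadd x y = vadd x (vscale 1 y) by apply: vec_ext => i; rewrite /vadd /vscale; ring.
  have H : vnorm (vadd x y) * vnorm (vadd x y) <= (vnorm x + vnorm y) * (vnorm x + vnorm y).
  { rewrite vnorm_sqr Hxy vdot_expand -!vnorm_sqr.
    have := cauchy_schwarz x y; have := Rle_abs (vdot x y); nra. }
  have := vnorm_nonneg (vadd x y); have := vnorm_nonneg x; have := vnorm_nonneg y; nra.
Qed.

Lemma vnorm_scale n c (x : vec n) : vnorm (vscale c x) = Rabs c * vnorm x.
Proof.
  rewrite /vnorm /vdot (eq_bigr (fun i => (c * c) * (x i * x i))); last first.
    by move=> i _; rewrite /vscale; ring.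
  rewrite rsum_scale sqrt_mult; [|nra|exact: vdot_self_nonneg].
  by rewrite -/(Rsqr c) sqrt_Rsqr_abs.
Qed.

Lemma vnorm_zero n : vnorm (@vzero n) = 0.
Proof.
  rewrite /vnorm /vdot (eq_bigr (fun _ => 0)); last by move=> i _; rewrite /vzero; ring.
  by rewrite rsum_const Rmult_0_r sqrt_0.
Qed.

Lemma vnorm_ge_coord n (x : vec n) i : Rabs (x i) <= vnorm x.
Proof.
  rewrite /vnorm -(sqrt_Rsqr (Rabs (x i))); last exact: Rabs_pos.
  apply: sqrt_le_1_alt; rewrite -Rsqr_abs /Rsqr.
  by apply: (rsum_ge_term (F := fun i => x i * x i)) => k; nra.
Qed.

Lemma vnorm_le_coord n (x : vec n) e : 0 <= e -> (forall i, Rabs (x i) <= e) ->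
  vnorm x <= sqrt (INR n) * e.
Proof.
  move=> He H; rewrite -(sqrt_Rsqr e) // -sqrt_mult; [|exact: pos_INR|exact: Rle_0_sqr].
  apply: sqrt_le_1_alt; rewrite -rsum_const; apply: rsum_le => i.
  rewrite /Rsqr (_ : x i * x i = Rabs (x i) * Rabs (x i)); last first.
    by rewrite -Rabs_mult Rabs_pos_eq //; nra.
  have := H i; have := Rabs_pos (x i); nra.
Qed.

Lemma vnorm_eq0 n (x : vec n) : vnorm x <= 0 -> x = vzero.
Proof.
  move=> H; apply: vec_ext => i; rewrite /vzero.
  have := vnorm_ge_coord x i; have := Rle_abs (x i); have := Rle_abs (- x i).
  rewrite Rabs_Ropp; lra.
Qed.

Lemma vnorm_pos_neq0 n (x : vec n) : 0 < vnorm x -> x <> vzero.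
Proof. by move=> H Hx; rewrite Hx vnorm_zero in H; lra. Qed.

Lemma vnorm_sub_sym n (x y : vec n) : vnorm (vsub x y) = vnorm (vsub y x).
Proof.
  rewrite (_ : vsub x y = vscale (-1) (vsub y x)) ?vnorm_scale; last first.
    by apply: vec_ext => i; rewrite /vsub /vscale; ring.
  by rewrite Rabs_Ropp Rabs_R1 Rmult_1_l.
Qed.

Lemma vnorm_sub_triangle n (x y w : vec n) :
  vnorm (vsub x w) <= vnorm (vsub x y) + vnorm (vsub y w).
Proof.
  rewrite (_ : vsub x w = vadd (vsub x y) (vsub y w)); first exact: vnorm_triangle.
  by apply: vec_ext => i; rewrite /vsub /vadd; ring.
Qed.

Lemma vnorm_reverse_triangle n (x y : vec n) : Rabs (vnorm x - vnorm y) <= vnorm (vsub x y).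
Proof.
  have H0 := vnorm_zero n.
  have Hx : vsub x vzero = x by apply: vec_ext => i; rewrite /vsub /vzero; ring.
  have Hy : vsub y vzero = y by apply: vec_ext => i; rewrite /vsub /vzero; ring.
  have := vnorm_sub_triangle x y vzero; have := vnorm_sub_triangle y x vzero.
  rewrite Hx Hy vnorm_sub_sym => H1 H2; apply: Rabs_le; lra.
Qed.

Lemma vnorm_convex n (x y : vec n) t r : 0 <= t <= 1 -> vnorm x <= r -> vnorm y <= r ->
  vnorm (vadd x (vscale t (vsub y x))) <= r.
Proof.
  move=> Ht Hx Hy.
  rewrite (_ : vadd x (vscale t (vsub y x)) = vadd (vscale (1 - t) x) (vscale t y)); last first.
    by apply: vec_ext => i; rewrite /vsub /vadd /vscale; ring.
  apply: Rle_trans (vnorm_triangle _ _) _.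
  rewrite !vnorm_scale !Rabs_pos_eq; nra.
Qed.

(** ** Sequential compactness of closed bounded subsets of R^n *)

Definition vlim n (u : nat -> vec n) (l : vec n) : Prop :=
  forall e, 0 < e -> exists N, forall k, (N <= k)%coq_nat -> vnorm (vsub (u k) l) < e.

Definition strictly_increasing (phi : nat -> nat) : Prop :=
  forall k, (phi k < phi (S k))%coq_nat.

Lemma strictly_increasing_ge phi : strictly_increasing phi -> forall k, (k <= phi k)%coq_nat.
Proof. by move=> H; elim=> [|k IH]; [lia | have := H k; lia]. Qed.

Lemma strictly_increasing_mono phi : strictly_increasing phi ->
  forall j k, (j <= k)%coq_nat -> (phi j <= phi k)%coq_nat.
Proof. by move=> H j k; elim=> [|m _ IH]; [lia | have := H m; lia]. Qed.

Lemma strictly_increasing_comp phi psi : strictly_increasing phi -> strictly_increasing psi ->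
  strictly_increasing (fun k => phi (psi k)).
Proof.
  move=> Hphi Hpsi k; have := strictly_increasing_mono Hphi (Hpsi k); have := Hphi (psi k); lia.
Qed.

Lemma Un_cv_subseq u l phi : Un_cv u l -> strictly_increasing phi -> Un_cv (fun k => u (phi k)) l.
Proof.
  move=> H Hphi e He; have [N HN] := H e He; exists N => k Hk; apply: HN.
  by have := strictly_increasing_ge Hphi k; lia.
Qed.

Lemma inv_succ_small e : 0 < e -> exists N, forall k, (N <= k)%coq_nat -> / (INR k + 1) < e.
Proof.
  move=> He; have [N [HN HN0]] := archimed_cor1 e He; exists N => k Hk.
  apply: Rle_lt_trans HN; apply: Rinv_le_contravar; first by apply: lt_0_INR; lia.
  by have := le_INR _ _ Hk; lra.
Qed.

(** Picking, for every k, a term beyond the previously picked one within 1/(k+1) of l. *)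
Fixpoint extraction (g : nat -> nat -> nat) (k : nat) : nat :=
  if k is S k' then g (S (extraction g k')) k else g O O.

Lemma cluster_subseq (u : nat -> R) l :
  (forall e N, 0 < e -> exists p, (N <= p)%coq_nat /\ Rabs (u p - l) < e) ->
  exists phi, strictly_increasing phi /\ Un_cv (fun k => u (phi k)) l.
Proof.
  move=> Hl.
  have [g Hg] : exists g : nat -> nat -> nat,
      forall N k, (N <= g N k)%coq_nat /\ Rabs (u (g N k) - l) < / (INR k + 1).
  { have Hpos k : 0 < / (INR k + 1) by apply: Rinv_0_lt_compat; have := pos_INR k; lra.
    have [g Hg] := choice (fun (Nk : nat * nat) p =>
        (Nk.1 <= p)%coq_nat /\ Rabs (u p - l) < / (INR Nk.2 + 1))
      (fun Nk => Hl _ Nk.1 (Hpos Nk.2)).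
    by exists (fun N k => g (N, k)) => N k; exact: (Hg (N, k)). }
  exists (extraction g); split.
  - by move=> k /=; have := (Hg (S (extraction g k)) (S k)).1; lia.
  - move=> e He; have [N HN] := inv_succ_small He; exists N => k Hk.
    apply: Rlt_trans (HN k Hk); rewrite /R_dist.
    by case: k Hk => [|k] Hk /=; [exact: (Hg 0%nat 0%nat).2 | exact: (Hg _ _).2].
Qed.

Lemma bounded_real_subseq (u : nat -> R) r : (forall k, Rabs (u k) <= r) ->
  exists phi l, strictly_increasing phi /\ Un_cv (fun k => u (phi k)) l.
Proof.
  move=> Hb; have [l Hl] : exists l, ValAdh u l.
  { apply: (Bolzano_Weierstrass _ _ (compact_P3 (- r) r)) => k.
    by have := Hb k; have := Rle_abs (u k); have := Rle_abs (- u k); rewrite Rabs_Ropp; lra. }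
  have [phi Hphi] : exists phi, strictly_increasing phi /\ Un_cv (fun k => u (phi k)) l.
  { apply: cluster_subseq => e N He.
    have Hnbh : neighbourhood (disc l (mkposreal e He)) l by exists (mkposreal e He).
    by have [p [HpN Hp]] := Hl _ N Hnbh; exists p. }
  by exists phi, l.
Qed.

Lemma vlim_of_coords n (u : nat -> vec n) l :
  (forall i, Un_cv (fun k => u k i) (l i)) -> vlim u l.
Proof.
  move=> Hl e He.
  set e' := e / (sqrt (INR n) + 1).
  have Hsq := sqrt_pos (INR n).
  have He' : 0 < e' by apply: Rdiv_lt_0_compat; lra.
  have [N HN] := choice (fun i N => forall k, (k >= N)%coq_nat -> R_dist (u k i) (l i) < e')
    (fun i => Hl i e' He').
  exists (\max_i N i) => k Hk.
  apply: (Rle_lt_trans _ (sqrt (INR n) * e')).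
  - apply: vnorm_le_coord => [|i]; first lra.
    apply: Rlt_le; apply: HN; apply: Nat.le_trans Hk; apply/leP; exact: leq_bigmax.
  - rewrite /e'; apply: (Rmult_lt_reg_r (sqrt (INR n) + 1)); first lra.
    by field_simplify; [nra | lra].
Qed.

(** Successive extractions make the first m coordinates converge. *)
Lemma coords_subseq n (u : nat -> vec n) r : (forall k, vnorm (u k) <= r) ->
  forall m, exists phi, strictly_increasing phi /\
    forall i : 'I_n, (i < m)%coq_nat -> exists li, Un_cv (fun k => u (phi k) i) li.
Proof.
  move=> Hb; elim=> [|m [phi [Hphi Hc]]].
    by exists id; split=> [k /=|i Hi]; lia.
  case: (ltnP m n) => Hmn; last first.
    exists phi; split=> // i Hi; apply: Hc.
    by have := ltn_ord i => /ltP; move/leP: Hmn; lia.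
  pose im := Ordinal Hmn.
  have [psi [lm [Hpsi Hlm]]] := bounded_real_subseq (u := fun k => u (phi k) im) (r := r)
    (fun k => Rle_trans _ _ _ (vnorm_ge_coord _ _) (Hb _)).
  exists (fun k => phi (psi k)); split; first exact: strictly_increasing_comp.
  move=> i Hi; case: (Nat.eq_dec i m) => Him.
  - by rewrite (_ : i = im); [exists lm | apply: val_inj].
  - have [li Hli] := Hc i ltac:(lia).
    by exists li; exact: (Un_cv_subseq (u := fun k => u (phi k) i)).
Qed.

Lemma bounded_vec_subseq n (u : nat -> vec n) r : (forall k, vnorm (u k) <= r) ->
  exists phi l, strictly_increasing phi /\ vlim (fun k => u (phi k)) l.
Proof.
  move=> Hb; have [phi [Hphi Hc]] := coords_subseq Hb n.
  have [l Hl] := choice (fun i li => Un_cv (fun k => u (phi k) i) li)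
    (fun i => Hc i (elimT ltP (ltn_ord i))).
  by exists phi, l; split=> //; apply: vlim_of_coords.
Qed.

Definition closed_set n (S : vec n -> Prop) : Prop :=
  forall u l, (forall k, S (u k)) -> vlim u l -> S l.

Lemma vlim_norm n (u : nat -> vec n) l : vlim u l -> Un_cv (fun k => vnorm (u k)) (vnorm l).
Proof.
  move=> H e He; have [N HN] := H e He; exists N => k Hk.
  exact: Rle_lt_trans (vnorm_reverse_triangle _ _) (HN k Hk).
Qed.

Lemma annulus_closed n a b : closed_set (fun x : vec n => a <= vnorm x <= b).
Proof.
  move=> u l Hu Hc; have Hlim := vlim_norm Hc.
  split; apply: Rnot_lt_le => Hlt.
  - have [N HN] := Hlim (a - vnorm l) ltac:(lra); have := HN N (le_n _); have := Hu N.
    by rewrite /R_dist; move=> ? ?; have := Rle_abs (vnorm (u N) - vnorm l); lra.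
  - have [N HN] := Hlim (vnorm l - b) ltac:(lra); have := HN N (le_n _); have := Hu N.
    rewrite /R_dist; move=> ? ?; have := Rle_abs (- (vnorm (u N) - vnorm l)).
    rewrite Rabs_Ropp; lra.
Qed.

Lemma ball_closed n r : closed_set (fun x : vec n => vnorm x <= r).
Proof.
  move=> u l Hu Hc; have [] // := @annulus_closed n 0 r u l _ Hc.
  by move=> k; split; [exact: vnorm_nonneg | exact: Hu].
Qed.

(** ** Continuous functions on closed bounded sets *)

Section Compact.
Variables (n : nat) (S : vec n -> Prop) (r : R).
Hypothesis S_closed : closed_set S.
Hypothesis S_bounded : forall x, S x -> vnorm x <= r.

Lemma compact_subseq u : (forall k, S (u k)) ->
  exists phi l, strictly_increasing phi /\ S l /\ vlim (fun k => u (phi k)) l.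
Proof.
  move=> Hu; have [phi [l [Hphi Hl]]] := bounded_vec_subseq (fun k => S_bounded (Hu k)).
  by exists phi, l; do 2!split=> //; apply: (S_closed (u := fun k => u (phi k))).
Qed.

Lemma vcont_vlim (g : vec n -> R) u l : vcont g -> vlim u l -> Un_cv (fun k => g (u k)) (g l).
Proof.
  move=> Hg Hc e He; have [d [Hd Hd']] := Hg l e He; have [N HN] := Hc d Hd.
  by exists N => k Hk; exact: Hd' (HN k Hk).
Qed.

Section Maximum.
Variable g : vec n -> R.
Hypothesis g_cont : vcont g.

(** A continuous function is bounded above on S: otherwise a subsequence of points
    with g >= k would converge in S, contradicting continuity at the limit. *)
Lemma cont_bounded_above : exists B, forall x, S x -> g x <= B.
Proof.
  apply: NNPP => Hno.
  have [u Hu] : exists u : nat -> vec n, forall k, S (u k) /\ INR k < g (u k).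
  { apply: (choice (fun k x => S x /\ INR k < g x)) => k.
    apply: NNPP => Hk; apply: Hno; exists (INR k) => x Hx.
    by apply: Rnot_lt_le => Hlt; apply: Hk; exists x. }
  have [phi [l [Hphi [_ Hc]]]] := compact_subseq (fun k => (Hu k).1).
  have [N HN] := vcont_vlim g_cont Hc Rlt_0_1.
  have [k Hk] := INR_unbounded (g l + 1).
  set j := Nat.max k N.
  have := HN j (Nat.le_max_r _ _); have := (Hu (phi j)).2.
  have : INR k <= INR (phi j) by apply: le_INR; have := strictly_increasing_ge Hphi j; lia.
  by rewrite /R_dist; move=> ? ? ?; have := Rle_abs (g (u (phi j)) - g l); lra.
Qed.

Lemma cont_attains_max x0 : S x0 -> exists xm, S xm /\ forall x, S x -> g x <= g xm.
Proof.
  move=> Hx0; have [B HB] := cont_bounded_above.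
  have [M [HM1 HM2]] : { M | is_lub (fun y => exists x, S x /\ y = g x) M }.
  { apply: completeness; first by exists B => y [x [Hx ->]]; exact: HB.
    by exists (g x0), x0. }
  have [u Hu] : exists u : nat -> vec n, forall k, S (u k) /\ M - / (INR k + 1) < g (u k).
  { apply: (choice (fun k x => S x /\ M - / (INR k + 1) < g x)) => k.
    apply: NNPP => Hk; have : M <= M - / (INR k + 1).
    { apply: HM2 => y [x [Hx ->]]; apply: Rnot_lt_le => Hlt; apply: Hk; by exists x. }
    have : 0 < / (INR k + 1) by apply: Rinv_0_lt_compat; have := pos_INR k; lra.
    lra. }
  have [phi [l [Hphi [Hl Hc]]]] := compact_subseq (fun k => (Hu k).1).
  exists l; split=> // x Hx; have : g x <= M by apply: HM1; exists x.
  suff : M <= g l by lra.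
  apply: Rnot_lt_le => Hlt; set e := (M - g l) / 2.
  have He : 0 < e by rewrite /e; lra.
  have [N1 HN1] := vcont_vlim g_cont Hc He.
  have [N2 HN2] := inv_succ_small He.
  set j := Nat.max N1 N2.
  have := HN1 j (Nat.le_max_l _ _).
  have := HN2 (phi j) ltac:(have := strictly_increasing_ge Hphi j; lia).
  have := (Hu (phi j)).2; rewrite /R_dist /e => ? ? ?.
  by have := Rle_abs (g (u (phi j)) - g l); lra.
Qed.

End Maximum.

Lemma cont_attains_min g x0 : vcont g -> S x0 ->
  exists xm, S xm /\ forall x, S x -> g xm <= g x.
Proof.
  move=> Hg Hx0; have Hng : vcont (fun x => - g x).
  { move=> x e He; have [d [Hd H]] := Hg x e He; exists d; split=> // y Hy.
    by rewrite -Rabs_Ropp (_ : - (- g y - - g x) = g y - g x); [exact: H | ring]. }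
  have [xm [Hxm Hmax]] := cont_attains_max Hng Hx0.
  by exists xm; split=> // x Hx; have := Hmax x Hx; lra.
Qed.

Lemma cont_pos_lower_bound g : vcont g -> (forall x, S x -> 0 < g x) ->
  exists c, 0 < c /\ forall x, S x -> c <= g x.
Proof.
  move=> Hg Hpos; case: (classic (exists x0, S x0)) => [[x0 Hx0]|Hempty].
  - have [xm [Hxm Hmin]] := cont_attains_min Hg Hx0.
    by exists (g xm); split=> //; exact: Hpos.
  - by exists 1; split=> [|x Hx]; [lra | case: Hempty; exists x].
Qed.

End Compact.

Lemma ball_max n (g : vec n -> R) r : vcont g -> 0 <= r ->
  exists xm, vnorm xm <= r /\ forall x, vnorm x <= r -> g x <= g xm.
Proof.
  move=> Hg Hr; apply: (cont_attains_max (@ball_closed n r) (fun x Hx => Hx) Hg (x0 := vzero)).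
  by rewrite vnorm_zero.
Qed.

Lemma ball_unif_cont n (g : vec n -> R) r : vcont g -> forall e, 0 < e -> exists d, 0 < d /\
  forall x y, vnorm x <= r -> vnorm y <= r -> vnorm (vsub x y) < d -> Rabs (g x - g y) < e.
Proof.
  move=> Hg e He; apply: NNPP => Hno.
  have [u Hu] : exists u : nat -> vec n * vec n, forall k,
      vnorm (u k).1 <= r /\ vnorm (u k).2 <= r /\
      vnorm (vsub (u k).1 (u k).2) < / (INR k + 1) /\ e <= Rabs (g (u k).1 - g (u k).2).
  { apply: (choice (fun k (xy : vec n * vec n) => vnorm xy.1 <= r /\ vnorm xy.2 <= r /\
      vnorm (vsub xy.1 xy.2) < / (INR k + 1) /\ e <= Rabs (g xy.1 - g xy.2))) => k.
    apply: NNPP => Hk; apply: Hno; exists (/ (INR k + 1)); split.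
      by apply: Rinv_0_lt_compat; have := pos_INR k; lra.
    move=> x y Hx Hy Hxy; apply: Rnot_le_lt => Hle; apply: Hk; by exists (x, y). }
  have [phi [l [Hphi [_ Hc]]]] :=
    compact_subseq (@ball_closed n r) (fun x Hx => Hx) (fun k => (Hu k).1).
  have [d [Hd Hd']] := Hg l (e / 2) ltac:(lra).
  have [N1 HN1] := Hc (d / 2) ltac:(lra).
  have [N2 HN2] := inv_succ_small (e := d / 2) ltac:(lra).
  set j := Nat.max N1 N2.
  have Hx := HN1 j (Nat.le_max_l _ _).
  have Hj := HN2 (phi j) ltac:(have := strictly_increasing_ge Hphi j; lia).
  have [_ [_ [Hxy Hge]]] := Hu (phi j).
  set x := (u (phi j)).1 in Hx Hxy Hge; set y := (u (phi j)).2 in Hxy Hge.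
  have Hgx := Hd' x ltac:(lra).
  have Hgy : Rabs (g y - g l) < e / 2.
  { apply: Hd'; apply: Rle_lt_trans (vnorm_sub_triangle y x l) _.
    by rewrite vnorm_sub_sym; lra. }
  have : Rabs (g x - g y) <= Rabs (g x - g l) + Rabs (g y - g l).
  { rewrite (_ : g x - g y = (g x - g l) + - (g y - g l)); last by ring.
    by apply: Rle_trans (Rabs_triang _ _) _; rewrite Rabs_Ropp; lra. }
  lra.
Qed.

(** ** Sublevel sets of a Lyapunov function *)

Lemma sublevel_bounded n (V : vec n -> R) : radially_unbounded V ->
  forall L, exists r, 0 <= r /\ forall x, V x <= L -> vnorm x <= r.
Proof.
  move=> HV L; have [r Hr] := HV (L + 1); exists (Rmax r 0); split; first exact: Rmax_r.
  move=> x Hx; apply: Rnot_lt_le => Hlt; have := Hr x ltac:(have := Rmax_l r 0; lra); lra.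
Qed.

Lemma small_near_zero n (V : vec n -> R) : vcont V -> V vzero = 0 ->
  forall al, 0 < al -> exists d, 0 < d /\ forall x, vnorm x < d -> V x < al.
Proof.
  move=> HV H0 al Hal; have [d [Hd H]] := HV vzero al Hal; exists d; split=> // x Hx.
  have Hx0 : vsub x vzero = x by apply: vec_ext => i; rewrite /vsub /vzero; ring.
  have := H x ltac:(by rewrite Hx0); rewrite H0; have := Rle_abs (V x - 0); lra.
Qed.

Lemma bounded_on_balls n (V : vec n -> R) : vcont V ->
  forall r, exists L, forall x, vnorm x <= r -> V x <= L.
Proof.
  move=> HV r; have [xm [_ Hmax]] := ball_max HV (Rmax_r r 0).
  by exists (V xm) => x Hx; apply: Hmax; have := Rmax_l r 0; lra.
Qed.

Lemma sublevel_small n (V : vec n -> R) : pos_def V -> vcont V -> radially_unbounded V ->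
  forall eta, 0 < eta -> exists al, 0 < al /\ forall x, V x < al -> vnorm x < eta.
Proof.
  move=> HVpd HV HVru eta Heta; have [r Hr] := HVru 1; set r' := Rmax r eta.
  have [c [Hc Hc']] := cont_pos_lower_bound (@annulus_closed n eta r')
    (fun x Hx => proj2 Hx) HV
    (fun x Hx => HVpd.2 x (vnorm_pos_neq0 (Rlt_le_trans _ _ _ Heta (proj1 Hx)))).
  exists (Rmin c 1); split; first by apply: Rmin_pos; lra.
  move=> x Hx; apply: Rnot_le_lt => Hge; case: (Rle_lt_dec (vnorm x) r') => H.
  - by have := Hc' x (conj Hge H); have := Rmin_l c 1; lra.
  - by have := Hr x ltac:(have := Rmax_l r eta; rewrite -/r'; lra); have := Rmin_r c 1; lra.
Qed.

(** ** A class-K-infinity majorant of a continuous function *)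

Definition is_ball_max n (V : vec n -> R) r m : Prop :=
  (exists z, vnorm z <= r /\ V z = m) /\ forall z, vnorm z <= r -> V z <= m.

Definition ball_max_value n (V : vec n -> R) r : R := epsilon (inhabits 0) (is_ball_max V r).

Section BallMax.
Variables (n : nat) (V : vec n -> R).
Hypothesis V_cont : vcont V.
Local Notation Vmax := (ball_max_value V).

Lemma ball_max_value_spec r : 0 <= r -> is_ball_max V r (Vmax r).
Proof.
  move=> Hr; apply: (epsilon_spec (inhabits 0) (is_ball_max V r)).
  have [xm [Hxm Hmax]] := ball_max V_cont Hr.
  by exists (V xm); split=> //; exists xm.
Qed.

Lemma ball_max_value_mono r s : 0 <= r -> r <= s -> Vmax r <= Vmax s.
Proof.
  move=> Hr Hrs; have [[z [Hz <-]] _] := ball_max_value_spec Hr.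
  by have [_ Hs] := ball_max_value_spec (Rle_trans _ _ _ Hr Hrs); apply: Hs; lra.
Qed.

(** The maximum on a ball grows by less than e when the radius grows by less than
    the modulus of uniform continuity of V: rescale a maximizer into the smaller ball. *)
Lemma ball_max_value_increment rmax e : 0 < e -> exists d, 0 < d /\
  forall lo hi, 0 <= lo -> lo <= hi -> hi <= rmax -> hi - lo < d -> Vmax hi - Vmax lo < e.
Proof.
  move=> He; have [d [Hd Hunif]] := ball_unif_cont rmax V_cont He.
  exists d; split=> // lo hi Hlo Hlh Hhi Hdiff.
  have [[zm [Hzm <-]] _] := ball_max_value_spec (Rle_trans _ _ _ Hlo Hlh).
  have [_ Hlo_max] := ball_max_value_spec Hlo.
  case: (Req_dec hi 0) => Hh0.
    by rewrite (_ : lo = hi) in Hlo_max *; [have := Hlo_max zm Hzm; lra | lra].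
  have Hq : 0 <= lo / hi <= 1.
  { split; first by apply: Rmult_le_pos; [lra | apply: Rlt_le; apply: Rinv_0_lt_compat; lra].
    apply: (Rmult_le_reg_r hi); first lra.
    by rewrite (_ : lo / hi * hi = lo); [lra | field]. }
  set z' := vscale (lo / hi) zm.
  have Hz' : vnorm z' <= lo.
  { rewrite /z' vnorm_scale Rabs_pos_eq; last lra.
    have : lo / hi * vnorm zm <= lo / hi * hi by apply: Rmult_le_compat_l; lra.
    by rewrite (_ : lo / hi * hi = lo) //; field. }
  have Hdist : vnorm (vsub zm z') < d.
  { rewrite (_ : vsub zm z' = vscale (1 - lo / hi) zm); last first.
      by apply: vec_ext => i; rewrite /vsub /z' /vscale; ring.
    rewrite vnorm_scale Rabs_pos_eq; last lra.
    have : (1 - lo / hi) * vnorm zm <= (1 - lo / hi) * hi by apply: Rmult_le_compat_l; lra.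
    by rewrite (_ : (1 - lo / hi) * hi = hi - lo); [lra | field]. }
  have := Hunif zm z' ltac:(lra) ltac:(lra) Hdist; have := Hlo_max z' Hz'.
  have := Rle_abs (V zm - V z'); lra.
Qed.

Lemma ball_max_value_cont : cont_nonneg Vmax.
Proof.
  move=> r e Hr He; have [d [Hd Hinc]] := ball_max_value_increment (r + 1) He.
  exists (Rmin d 1); split; first by apply: Rmin_pos; lra.
  move=> s Hs Hsr; have := Rmin_l d 1; have := Rmin_r d 1 => ? ?.
  case: (Rle_lt_dec r s) => Hrs.
  - rewrite Rabs_pos_eq; last by have := ball_max_value_mono Hr Hrs; lra.
    by rewrite Rabs_pos_eq in Hsr; [apply: Hinc; lra | lra].
  - rewrite Rabs_left1; last by have := ball_max_value_mono Hs (Rlt_le _ _ Hrs); lra.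
    by rewrite Rabs_left1 in Hsr; [have := Hinc s r Hs; lra | lra].
Qed.

End BallMax.

Lemma sqrt_diff_le a b : 0 <= a -> 0 <= b -> Rabs (sqrt a - sqrt b) <= sqrt (Rabs (a - b)).
Proof.
  have key x y : 0 <= y -> y <= x -> sqrt x - sqrt y <= sqrt (x - y).
  { move=> Hy Hyx; have := sqrt_pos y; have := sqrt_pos (x - y) => ? ?.
    suff : sqrt x <= sqrt y + sqrt (x - y) by lra.
    rewrite -(sqrt_square (sqrt y + sqrt (x - y))); last lra.
    apply: sqrt_le_1_alt.
    rewrite (_ : (sqrt y + sqrt (x - y)) * (sqrt y + sqrt (x - y)) =
      sqrt y * sqrt y + sqrt (x - y) * sqrt (x - y) + 2 * sqrt y * sqrt (x - y)); last ring.
    by rewrite !sqrt_sqrt; try lra; nra. }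
  move=> Ha Hb; case: (Rle_lt_dec b a) => Hab.
  - have : sqrt b <= sqrt a by apply: sqrt_le_1_alt.
    move=> ?; rewrite (Rabs_pos_eq (a - b)); last lra.
    by rewrite Rabs_pos_eq; [exact: key | lra].
  - have : sqrt a <= sqrt b by apply: sqrt_le_1_alt; lra.
    move=> ?; rewrite (Rabs_left1 (a - b)); last lra.
    rewrite Rabs_left1; last lra.
    by rewrite !Ropp_minus_distr; apply: key; lra.
Qed.

Lemma Kinf_sqrt_affine (g : R -> R) c : cont_nonneg g -> (forall r, 0 <= r -> 0 <= g r) ->
  (forall r s, 0 <= r -> r <= s -> g r <= g s) -> g 0 = 0 -> 0 <= c ->
  Kinf (fun r => c * sqrt (g r) + r).
Proof.
  move=> Hg Hnn Hmono H0 Hc; split; [|split; [|split]].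
  - by rewrite H0 sqrt_0; ring.
  - move=> r e Hr He; set e1 := e / 2 / (c + 1).
    have He1 : 0 < e1 by apply: Rdiv_lt_0_compat; lra.
    have [d [Hd Hd']] := Hg r (e1 * e1) Hr ltac:(nra).
    exists (Rmin d (e / 2)); split; first by apply: Rmin_pos; lra.
    move=> s Hs Hsr; have := Rmin_l d (e / 2); have := Rmin_r d (e / 2) => ? ?.
    have Hsq : Rabs (sqrt (g s) - sqrt (g r)) < e1.
    { apply: Rle_lt_trans (sqrt_diff_le (Hnn s Hs) (Hnn r Hr)) _.
      rewrite -(sqrt_square e1); last lra.
      by apply: sqrt_lt_1_alt; split; [exact: Rabs_pos | apply: Hd'; lra]. }
    rewrite (_ : c * sqrt (g s) + s - (c * sqrt (g r) + r) =
                 c * (sqrt (g s) - sqrt (g r)) + (s - r)); last ring.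
    apply: Rle_lt_trans (Rabs_triang _ _) _; rewrite Rabs_mult (Rabs_pos_eq c) //.
    have : c * e1 <= e / 2.
    { apply: (Rmult_le_reg_r (c + 1)); first lra.
      by rewrite (_ : c * e1 * (c + 1) = c * (e / 2)); [nra | rewrite /e1; field; lra]. }
    have : c * Rabs (sqrt (g s) - sqrt (g r)) <= c * e1 by apply: Rmult_le_compat_l; lra.
    lra.
  - move=> r s Hr Hrs; have := sqrt_le_1_alt _ _ (Hmono r s Hr (Rlt_le _ _ Hrs)); nra.
  - move=> B; exists (Rmax B 0); split; first exact: Rmax_r.
    have := Hnn _ (Rmax_r B 0); have := sqrt_pos (g (Rmax B 0)); have := Rmax_l B 0; nra.
Qed.

Lemma Kinf_majorant n (V : vec n -> R) c : vcont V -> V vzero = 0 -> 0 <= c ->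
  exists a, Kinf a /\ (forall r, 0 <= r -> 0 <= a r) /\
    forall x, 0 <= V x -> c * sqrt (V x) <= a (vnorm x).
Proof.
  move=> HV H0 Hc.
  have Hnn r : 0 <= r -> 0 <= ball_max_value V r.
  { move=> Hr; have [_ Hmax] := ball_max_value_spec HV Hr; rewrite -H0.
    by apply: Hmax; rewrite vnorm_zero. }
  exists (fun r => c * sqrt (ball_max_value V r) + r); split; last split.
  - apply: Kinf_sqrt_affine => //; first exact: ball_max_value_cont.
    + by move=> r s; exact: ball_max_value_mono.
    + have [[z [Hz <-]] _] := ball_max_value_spec HV (Rle_refl 0).
      by rewrite (vnorm_eq0 Hz).
  - by move=> r Hr; have := sqrt_pos (ball_max_value V r); nra.
  - move=> x _; have [_ Hmax] := ball_max_value_spec HV (vnorm_nonneg x).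
    have := sqrt_le_1_alt _ _ (Hmax x (Rle_refl _)); have := vnorm_nonneg x; nra.
Qed.

(** ** Differentiable functions on R^n *)

Lemma gradient_line_deriv n (V : vec n -> R) gV w d t : has_gradient V gV ->
  derivable_pt_lim (fun s => V (vadd w (vscale s d))) t (vdot (gV (vadd w (vscale t d))) d).
Proof.
  move=> HV eps Heps; set D := vnorm d; have HD : 0 <= D := vnorm_nonneg d.
  set x := vadd w (vscale t d).
  have [d0 [Hd0 H0]] := HV x (eps / (D + 1)) ltac:(apply: Rdiv_lt_0_compat; lra).
  have Hdel : 0 < d0 / (D + 1) by apply: Rdiv_lt_0_compat; lra.
  exists (mkposreal _ Hdel) => h Hh0 /= Hh.
  have Hstep : vsub (vadd w (vscale (t + h) d)) x = vscale h d.
  { by apply: vec_ext => i; rewrite /vsub /vadd /vscale /x /vadd /vscale; ring. }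
  have Hah : 0 < Rabs h by apply: Rabs_pos_lt.
  have Hsmall : Rabs h * D < d0.
  { apply: (Rle_lt_trans _ (Rabs h * (D + 1))); first nra.
    have : Rabs h * (D + 1) < d0 / (D + 1) * (D + 1) by apply: Rmult_lt_compat_r; lra.
    by rewrite (_ : d0 / (D + 1) * (D + 1) = d0) //; field; lra. }
  have Hnear : vnorm (vsub (vadd w (vscale (t + h) d)) x) < d0 by rewrite Hstep vnorm_scale.
  have := H0 _ Hnear; rewrite Hstep vdot_scale_r vnorm_scale -/D => H1.
  set E := V (vadd w (vscale (t + h) d)) - V x - h * vdot (gV x) d in H1.
  rewrite (_ : (V (vadd w (vscale (t + h) d)) - V x) / h - vdot (gV x) d = E / h); last first.
    by rewrite /E; field.
  rewrite /Rdiv Rabs_mult Rabs_inv -/(Rdiv _ _); apply: (Rmult_lt_reg_r (Rabs h)) => //.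
  rewrite (_ : Rabs E / Rabs h * Rabs h = Rabs E); last by field; lra.
  apply: Rle_lt_trans H1 _.
  have : eps / (D + 1) * D < eps.
  { apply: (Rmult_lt_reg_r (D + 1)); first lra.
    by rewrite (_ : eps / (D + 1) * D * (D + 1) = eps * D); [nra | field; lra]. }
  nra.
Qed.

Lemma gradient_lipschitz n (V : vec n -> R) gV w y m r : has_gradient V gV ->
  vnorm w <= r -> vnorm y <= r -> (forall z, vnorm z <= r -> vnorm (gV z) <= m) ->
  V y - V w <= m * vnorm (vsub y w).
Proof.
  move=> HV Hw Hy Hm; set d := vsub y w.
  have Hw0 : vadd w (vscale 0 d) = w by apply: vec_ext => i; rewrite /vadd /vscale; ring.
  have Hy1 : vadd w (vscale 1 d) = y.
    by apply: vec_ext => i; rewrite /vadd /vscale /d /vsub; ring.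
  have [c [Hc Hc01]] := MVT_cor2 (fun s => V (vadd w (vscale s d)))
    (fun s => vdot (gV (vadd w (vscale s d))) d) 0 1 Rlt_0_1
    (fun c _ => gradient_line_deriv w d c HV).
  rewrite Hw0 Hy1 in Hc; rewrite Hc Rminus_0_r Rmult_1_r.
  apply: Rle_trans (Rle_abs _) _; apply: Rle_trans (cauchy_schwarz _ _) _.
  apply: Rmult_le_compat_r; first exact: vnorm_nonneg.
  by apply: Hm; apply: vnorm_convex => //; lra.
Qed.

Lemma gradient_cont n (V : vec n -> R) gV : has_gradient V gV -> vcont V.
Proof.
  move=> HV x eps Heps; have [d0 [Hd0 H0]] := HV x 1 Rlt_0_1.
  set G := vnorm (gV x); have HG : 0 <= G := vnorm_nonneg _.
  have Hq : 0 < eps / (G + 2) by apply: Rdiv_lt_0_compat; lra.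
  exists (Rmin d0 (eps / (G + 2))); split; first exact: Rmin_pos.
  move=> y Hy; have := Rmin_l d0 (eps / (G + 2)); have := Rmin_r d0 (eps / (G + 2)) => H2 H1.
  have Hrem := H0 y ltac:(lra).
  have Hcs := cauchy_schwarz (gV x) (vsub y x); have Hn := vnorm_nonneg (vsub y x).
  have : Rabs (V y - V x) <=
    Rabs (V y - V x - vdot (gV x) (vsub y x)) + Rabs (vdot (gV x) (vsub y x)).
  { rewrite {1}(_ : V y - V x = (V y - V x - vdot (gV x) (vsub y x)) + vdot (gV x) (vsub y x)).
      exact: Rabs_triang.
    ring. }
  have : (G + 2) * vnorm (vsub y x) < eps.
  { have : (G + 2) * vnorm (vsub y x) < (G + 2) * (eps / (G + 2))
      by apply: Rmult_lt_compat_l; lra.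
    by rewrite (_ : (G + 2) * (eps / (G + 2)) = eps) //; field; lra. }
  rewrite -/G in Hcs; nra.
Qed.

Lemma vcontv_norm n (g : vec n -> vec n) : vcontv g -> vcont (fun x => vnorm (g x)).
Proof.
  move=> Hg x e He; have [d [Hd H]] := Hg x e He; exists d; split=> // y Hy.
  exact: Rle_lt_trans (vnorm_reverse_triangle _ _) (H y Hy).
Qed.

(** ** One step of the Runge-Kutta scheme decreases V *)

Lemma pos_def_nonneg n (g : vec n -> R) : pos_def g -> forall x, 0 <= g x.
Proof.
  move=> [H0 H] x; case: (classic (x = vzero)) => [->|Hx]; [lra | exact: Rlt_le (H x Hx)].
Qed.

Lemma lVb_exists n (gV : vec n -> vec n) bb x : vcontv gV -> exists m, is_lVb gV bb x m.
Proof.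
  move=> HgV; have Hr : 0 <= exp bb * vnorm x.
    by have := exp_pos bb; have := vnorm_nonneg x; nra.
  have [zm [Hzm Hmax]] := ball_max (vcontv_norm HgV) Hr.
  by exists (vnorm (gV zm)); split; [exists zm | ].
Qed.

(** Under the step-size restriction h <= (q)^(1/p), with q = (1-lam) w / (m c), the
    local error term m c h^(p+1) is absorbed by the fraction (1-lam) of the decrease h w. *)
Lemma local_error_absorbed p m c w h lam : (1 <= p)%N -> 0 <= m -> 0 <= c -> 0 <= w ->
  0 <= h -> lam < 1 ->
  (0 < m -> 0 < c -> 0 < w /\ h <= Rpower ((1 - lam) * w / (m * c)) (/ INR p)) ->
  m * (c * h ^ p.+1) <= (1 - lam) * h * w.
Proof.
  move=> Hp Hm Hc Hw Hh Hlam Hphi.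
  have Hhw : 0 <= (1 - lam) * h * w by apply: Rmult_le_pos => //; nra.
  have Hhp : 0 <= h ^ p by apply: pow_le.
  case: Hm => Hm; last by rewrite -Hm; lra.
  case: Hc => Hc; last by rewrite -Hc; lra.
  have [Hw' Hhq] := Hphi Hm Hc; set q := (1 - lam) * w / (m * c) in Hhq.
  have Hq : 0 < q by apply: Rdiv_lt_0_compat; nra.
  have Hp' : 0 < INR p by apply: lt_0_INR; move/leP: Hp; lia.
  have Hpow : h ^ p <= q.
  { rewrite (_ : q = Rpower q (/ INR p) ^ p); first by apply: pow_incr; lra.
    by rewrite -Rpower_pow ?Rpower_mult ?Rinv_l ?Rpower_1 //; [lra | exact: exp_pos]. }
  have : m * c * h ^ p <= m * c * q by apply: Rmult_le_compat_l; nra.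
  rewrite (_ : m * c * q = (1 - lam) * w) /=; last by rewrite /q; field; lra.
  nra.
Qed.

Section OneStep.
Variables (n p : nat) (z : R -> vec n -> vec n) (phi : vec n -> R) (F : R -> vec n -> vec n).
Variables (V : vec n -> R) (gV : vec n -> vec n) (W C : vec n -> R) (bb lam : R).
Hypothesis p_ge1 : (1 <= p)%N.
Hypothesis V_grad : has_gradient V gV.
Hypothesis gV_cont : vcontv gV.
Hypothesis W_pd : pos_def W.
Hypothesis C_pd : pos_def C.
Hypothesis flow_decrease : forall x h, 0 <= h <= phi x -> V (z h x) <= V x - h * W x.
Hypothesis step_growth : forall x h, 0 <= h <= phi x ->
  vnorm (z h x) <= exp bb * vnorm x /\ vnorm (vadd x (vscale h (F h x))) <= exp bb * vnorm x.
Hypothesis local_error : forall x h, 0 <= h <= phi x ->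
  vnorm (vsub (vsub (z h x) x) (vscale h (F h x))) <= C x * h ^ p.+1.
Hypothesis lam_lt1 : lam < 1.
Hypothesis phi_restriction : forall x m, x <> vzero -> is_lVb gV bb x m ->
  phi x <= Rpower ((1 - lam) * W x / (m * C x)) (/ INR p).

Lemma rk_step_decrease x h : 0 <= h <= phi x ->
  V (vadd x (vscale h (F h x))) <= V x - lam * h * W x.
Proof.
  move=> Hh; have [m Hm] := lVb_exists bb x gV_cont.
  have [[zm [_ Hzm]] Hmax] := Hm.
  set y := z h x; set y' := vadd x (vscale h (F h x)).
  have [Hy Hy'] := step_growth Hh.
  have Hdist : vnorm (vsub y' y) = vnorm (vsub (vsub y x) (vscale h (F h x))).
  { rewrite vnorm_sub_sym; congr vnorm; apply: vec_ext => i.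
    by rewrite /vsub /y' /vadd /vscale; ring. }
  have Hlip : V y' - V y <= m * vnorm (vsub y' y) := gradient_lipschitz V_grad Hy Hy' Hmax.
  have Herr : m * vnorm (vsub y' y) <= m * (C x * h ^ p.+1).
  { apply: Rmult_le_compat_l; first by rewrite -Hzm; exact: vnorm_nonneg.
    by rewrite Hdist; exact: local_error. }
  have Habs : m * (C x * h ^ p.+1) <= (1 - lam) * h * W x.
  { apply: local_error_absorbed => //; try exact: pos_def_nonneg; try lra.
    - by rewrite -Hzm; exact: vnorm_nonneg.
    - move=> _ HC; have Hx : x <> vzero by move=> Hx; rewrite Hx C_pd.1 in HC; lra.
      split; first exact: W_pd.2.
      by apply: (Rle_trans _ _ _ _ (phi_restriction Hx Hm)); lra. }
  have := flow_decrease Hh; rewrite -/y; lra.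
Qed.

End OneStep.

(** ** The hybrid trajectory *)

Lemma exp_monotone x y : x <= y -> exp x <= exp y.
Proof. by case=> [H|->]; [apply: Rlt_le; exact: exp_increasing | lra]. Qed.

Lemma hyb_tau_S n phi F u (x0 : vec n) k :
  hyb_tau phi F u x0 k.+1 = hyb_tau phi F u x0 k + hyb_h phi F u x0 k.
Proof. by []. Qed.

Lemma hyb_x_S n phi F u (x0 : vec n) k :
  hyb_x phi F u x0 k.+1 =
  vadd (hyb_x phi F u x0 k) (vscale (hyb_h phi F u x0 k) (F (hyb_h phi F u x0 k) (hyb_x phi F u x0 k))).
Proof. by []. Qed.

Section Hybrid.
Variables (n : nat) (phi : vec n -> R) (F : R -> vec n -> vec n).
Hypothesis phi_pos : forall x, 0 < phi x.

Local Notation tau := (hyb_tau phi F).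
Local Notation xs := (hyb_x phi F).
Local Notation hs := (hyb_h phi F).

Lemma hyb_grid u x0 : admissible u ->
  forall k, 0 <= tau u x0 k /\ 0 < hs u x0 k /\ hs u x0 k <= phi (xs u x0 k).
Proof.
  move=> [u_nonneg _].
  have Hh k : 0 < hs u x0 k by apply: Rmult_lt_0_compat; [exact: phi_pos | exact: exp_pos].
  have Ht k : 0 <= tau u x0 k.
    by elim: k => [|k IH]; [rewrite /hyb_tau /=; lra | rewrite hyb_tau_S; have := Hh k; lra].
  move=> k; do 2!split=> //; rewrite /hyb_h.
  have : exp (- u (tau u x0 k)) <= 1.
    by rewrite -exp_0; apply: exp_monotone; have := u_nonneg _ (Ht k); lra.
  have := phi_pos (xs u x0 k); have := exp_pos (- u (tau u x0 k)); nra.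
Qed.

(** Between consecutive grid points the trajectory stays in the ball of radius
    exp(b)|x(tau_i)|, since it is a convex combination of x(tau_i) and x(tau_(i+1)). *)
Lemma hyb_at_near_grid bb u x0 t y : admissible u -> 0 <= bb ->
  (forall x h, 0 <= h <= phi x -> vnorm (vadd x (vscale h (F h x))) <= exp bb * vnorm x) ->
  hyb_at phi F u x0 t y ->
  exists i, tau u x0 i <= t <= tau u x0 i + hs u x0 i /\ vnorm y <= exp bb * vnorm (xs u x0 i).
Proof.
  move=> Hu Hbb Hstep [i [Hti ->]]; exists i; split=> //.
  set x := xs u x0 i in Hti *; set h := hs u x0 i in Hti *; set ti := tau u x0 i in Hti *.
  have [_ [Hh0 Hh]] := hyb_grid x0 Hu i; rewrite -/x -/h in Hh0 Hh.
  set th := (t - ti) / h.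
  have Hth : 0 <= th <= 1.
  { rewrite /th; split; first by apply: Rmult_le_pos; [lra | apply: Rlt_le; exact: Rinv_0_lt_compat].
    apply: (Rmult_le_reg_r h) => //.
    by rewrite (_ : (t - ti) / h * h = t - ti); [lra | field; lra]. }
  rewrite (_ : vadd x (vscale (t - ti) (F h x)) =
               vadd x (vscale th (vsub (vadd x (vscale h (F h x))) x))); last first.
    by apply: vec_ext => k; rewrite /vadd /vscale /vsub /th /vadd /vscale; field; lra.
  have He : 1 <= exp bb by rewrite -exp_0; apply: exp_monotone.
  apply: vnorm_convex => //; last by apply: Hstep; lra.
  by have := vnorm_nonneg x; nra.
Qed.

Variables (V W : vec n -> R) (lam : R).
Hypothesis lam_pos : 0 < lam.
Hypothesis W_nonneg : forall x, 0 <= W x.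
Hypothesis scheme_decrease : forall x h, 0 <= h <= phi x ->
  V (vadd x (vscale h (F h x))) <= V x - lam * h * W x.

Lemma hyb_V_step u x0 k : admissible u ->
  V (xs u x0 k.+1) <= V (xs u x0 k) - lam * hs u x0 k * W (xs u x0 k).
Proof. by move=> Hu; rewrite hyb_x_S; apply: scheme_decrease; have := hyb_grid x0 Hu k; lra. Qed.

Lemma hyb_V_mono u x0 j k : admissible u -> (j <= k)%coq_nat -> V (xs u x0 k) <= V (xs u x0 j).
Proof.
  move=> Hu; elim=> [|m _ IH]; first lra.
  have := hyb_V_step x0 m Hu; have [_ [Hh _]] := hyb_grid x0 Hu m.
  have := W_nonneg (xs u x0 m) => Hw.
  have : 0 <= lam * hs u x0 m * W (xs u x0 m) by apply: Rmult_le_pos => //; nra.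
  lra.
Qed.

Lemma hyb_V_le_init u x0 k : admissible u -> V (xs u x0 k) <= V x0.
Proof. by move=> Hu; exact: (hyb_V_mono x0 Hu (le_0_n k)). Qed.

Lemma hyb_V_decay_rate u x0 w i : admissible u ->
  (forall j, (j < i)%coq_nat -> w <= W (xs u x0 j)) ->
  V (xs u x0 i) <= V x0 - lam * w * tau u x0 i.
Proof.
  move=> Hu; elim: i => [|k IH] Hw; first by rewrite /hyb_tau /hyb_x /= Rmult_0_r; lra.
  have := IH (fun j Hj => Hw j ltac:(lia)); have := hyb_V_step x0 k Hu.
  have := Hw k ltac:(lia); have [_ [Hh _]] := hyb_grid x0 Hu k; rewrite hyb_tau_S => ? ? ?.
  have : lam * hs u x0 k * w <= lam * hs u x0 k * W (xs u x0 k)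
    by apply: Rmult_le_compat_l => //; nra.
  lra.
Qed.

Hypothesis phi_cont : vcont phi.
Hypothesis V_radially_unbounded : radially_unbounded V.

(** The grid times tend to infinity: the trajectory stays in a bounded sublevel set
    of V, on which phi is bounded below, while u is bounded on [0, t]. *)
Lemma hyb_grid_unbounded u x0 t : admissible u -> 0 <= t -> exists k, t < tau u x0 k.
Proof.
  move=> Hu Ht; apply: NNPP => Hno.
  have Hle k : tau u x0 k <= t by apply: Rnot_lt_le => H; apply: Hno; exists k.
  have [B HB] := Hu.2 t Ht.
  have [r [_ Hr]] := sublevel_bounded V_radially_unbounded (V x0).
  have [c [Hc Hc']] := cont_pos_lower_bound (@ball_closed n r) (fun x Hx => Hx) phi_cont
    (fun x _ => phi_pos x).
  set hmin := c * exp (- B).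
  have Hhmin : 0 < hmin by apply: Rmult_lt_0_compat => //; exact: exp_pos.
  have Hh k : hmin <= hs u x0 k.
  { have [Htk _] := hyb_grid x0 Hu k.
    have : exp (- B) <= exp (- u (tau u x0 k)).
      by apply: exp_monotone; have := HB _ (conj Htk (Hle k)); lra.
    have := Hc' _ (Hr _ (hyb_V_le_init x0 k Hu)); have := exp_pos (- B); rewrite /hmin /hyb_h; nra. }
  have Htk k : INR k * hmin <= tau u x0 k.
    by elim: k => [|k IH]; [rewrite /hyb_tau /=; lra | rewrite hyb_tau_S S_INR; have := Hh k; lra].
  have [k Hk] := INR_unbounded (t / hmin).
  have := Htk k; have := Hle k.
  have : t < INR k * hmin.
  { have : t / hmin * hmin < INR k * hmin by apply: Rmult_lt_compat_r.
    by rewrite (_ : t / hmin * hmin = t) //; field; lra. }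
  lra.
Qed.

Lemma hyb_defined u x0 t : admissible u -> 0 <= t ->
  exists i, tau u x0 i <= t <= tau u x0 i + hs u x0 i.
Proof.
  move=> Hu Ht; have [k Hk] := hyb_grid_unbounded x0 Hu Ht.
  elim: k Hk => [|k IH] Hk; first by rewrite /hyb_tau /= in Hk; lra.
  case: (Rlt_le_dec t (tau u x0 k)) => H; first exact: IH.
  by exists k; split=> //; rewrite hyb_tau_S in Hk; lra.
Qed.

Lemma hyb_complete_of_decrease : hyb_complete phi F.
Proof.
  move=> u x0 Hu t Ht; have [i Hi] := hyb_defined x0 Hu Ht.
  by eexists; exists i; split; [exact: Hi | reflexivity].
Qed.

(** ** Uniform robust global asymptotic stability *)

Variable bb : R.
Hypothesis bb_nonneg : 0 <= bb.
Hypothesis scheme_growth : forall x h, 0 <= h <= phi x ->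
  vnorm (vadd x (vscale h (F h x))) <= exp bb * vnorm x.
Hypothesis V_pd : pos_def V.
Hypothesis V_cont : vcont V.

Lemma exp_scaled_small eps (x : vec n) :
  0 < eps -> vnorm x < eps / exp bb -> exp bb * vnorm x < eps.
Proof.
  move=> Heps Hx; have Hb := exp_pos bb.
  have : exp bb * vnorm x < exp bb * (eps / exp bb) by apply: Rmult_lt_compat_l.
  by rewrite (_ : exp bb * (eps / exp bb) = eps) //; field; lra.
Qed.

(** URGAS (a): since V is nonincreasing along the grid, small initial states keep V
    small, hence the grid states small, hence the whole trajectory small. *)
Lemma hyb_uniform_stable : forall eps, 0 < eps -> exists d, 0 < d /\
  forall u x0 t y, admissible u -> vnorm x0 < d -> 0 <= t ->
    hyb_at phi F u x0 t y -> vnorm y < eps.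
Proof.
  move=> eps Heps; have Heta : 0 < eps / exp bb by apply: Rdiv_lt_0_compat => //; exact: exp_pos.
  have [al [Hal Hsmall]] := sublevel_small V_pd V_cont V_radially_unbounded Heta.
  have [d [Hd Hnear]] := small_near_zero V_cont V_pd.1 Hal.
  exists d; split=> // u x0 t y Hu Hx0 Ht Hy.
  have [i [_ Hyi]] := hyb_at_near_grid Hu bb_nonneg scheme_growth Hy.
  apply: Rle_lt_trans Hyi _; apply: exp_scaled_small => //; apply: Hsmall.
  exact: Rle_lt_trans (hyb_V_le_init x0 i Hu) (Hnear x0 Hx0).
Qed.

(** URGAS (b): the grid states stay in the sublevel set {V <= max of V on the initial ball}. *)
Lemma hyb_uniform_bounded : forall Rad, exists B, forall u x0 t y, admissible u ->
  vnorm x0 <= Rad -> 0 <= t -> hyb_at phi F u x0 t y -> vnorm y <= B.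
Proof.
  move=> Rad; have [L HL] := bounded_on_balls V_cont Rad.
  have [r [_ Hr]] := sublevel_bounded V_radially_unbounded L.
  exists (exp bb * r) => u x0 t y Hu Hx0 Ht Hy.
  have [i [_ Hyi]] := hyb_at_near_grid Hu bb_nonneg scheme_growth Hy.
  apply: Rle_trans Hyi _; apply: Rmult_le_compat_l; first exact: Rlt_le (exp_pos bb).
  by apply: Hr; apply: Rle_trans (hyb_V_le_init x0 i Hu) (HL x0 Hx0).
Qed.

Hypothesis W_pos : forall x, x <> vzero -> 0 < W x.
Hypothesis W_cont : vcont W.

(** Uniform attractivity: from the ball of radius Rad, the trajectory enters the
    sublevel set {V < al} before a uniform time, since outside of it W is bounded below
    on a compact annulus and V decreases at a uniform rate. *)
Lemma hyb_uniform_attractive : forall eps Rad, 0 < eps -> exists T, forall u x0 t y,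
  admissible u -> vnorm x0 <= Rad -> T <= t -> hyb_at phi F u x0 t y -> vnorm y <= eps.
Proof.
  move=> eps Rad Heps; have [L HL] := bounded_on_balls V_cont Rad.
  have [r [Hr0 Hr]] := sublevel_bounded V_radially_unbounded L.
  have Heta : 0 < eps / exp bb by apply: Rdiv_lt_0_compat => //; exact: exp_pos.
  have [al [Hal Hsmall]] := sublevel_small V_pd V_cont V_radially_unbounded Heta.
  have [d [Hd Hnear]] := small_near_zero V_cont V_pd.1 Hal.
  have [w [Hw Hwmin]] := cont_pos_lower_bound (@annulus_closed n d r) (fun x Hx => proj2 Hx)
    W_cont (fun x Hx => W_pos (vnorm_pos_neq0 (Rlt_le_trans _ _ _ Hd (proj1 Hx)))).
  have [xm [_ Hphimax]] := ball_max phi_cont Hr0.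
  exists (L / (lam * w) + phi xm + 1) => u x0 t y Hu Hx0 Ht Hy.
  have [i [Hti Hyi]] := hyb_at_near_grid Hu bb_nonneg scheme_growth Hy.
  have Hxr k : vnorm (xs u x0 k) <= r.
    by apply: Hr; exact: Rle_trans (hyb_V_le_init x0 k Hu) (HL x0 Hx0).
  suff Hxi : V (xs u x0 i) < al.
    by apply: Rlt_le; apply: Rle_lt_trans Hyi _; apply: exp_scaled_small => //; exact: Hsmall.
  apply: Rnot_le_lt => Hge.
  have Hdecay : V (xs u x0 i) <= V x0 - lam * w * tau u x0 i.
  { apply: hyb_V_decay_rate => // j Hj; apply: Hwmin; split; last exact: Hxr.
    apply: Rnot_lt_le => Hlt; have := Hnear _ Hlt.
    have := hyb_V_mono x0 Hu (Nat.lt_le_incl _ _ Hj); lra. }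
  have Htau : tau u x0 i <= L / (lam * w).
  { apply: (Rmult_le_reg_r (lam * w)); first nra.
    rewrite (_ : L / (lam * w) * (lam * w) = L); last by field; lra.
    have := HL x0 Hx0; have := V_pd; move/pos_def_nonneg/(_ (xs u x0 i)); nra. }
  have [_ [_ Hh]] := hyb_grid x0 Hu i; have := Hphimax _ (Hxr i); lra.
Qed.

Lemma hyb_URGAS : URGAS phi F.
Proof.
  by split; [exact: hyb_uniform_stable | split; [exact: hyb_uniform_bounded | exact: hyb_uniform_attractive]].
Qed.

(** ** Robust K-exponential stability *)

Variables sigma K : R.
Hypothesis sigma_pos : 0 < sigma.
Hypothesis K_pos : 0 < K.
Hypothesis W_ge_V : forall x, 2 * sigma * V x <= W x.
Hypothesis V_ge_quadratic : forall x, K * vnorm x ^ 2 <= V x.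

Local Notation rate := (sigma * lam).

Lemma hyb_V_exp_decay u x0 k : admissible u ->
  V (xs u x0 k) <= V x0 * exp (- 2 * rate * tau u x0 k).
Proof.
  move=> Hu; elim: k => [|k IH]; first by rewrite /hyb_tau /hyb_x /= Rmult_0_r exp_0; lra.
  have HVk := pos_def_nonneg V_pd (xs u x0 k).
  have Hstep : V (xs u x0 k.+1) <= V (xs u x0 k) * (1 - 2 * rate * hs u x0 k).
  { have := hyb_V_step x0 k Hu; have := W_ge_V (xs u x0 k); have [_ [Hh _]] := hyb_grid x0 Hu k.
    move=> ? ?; have : lam * hs u x0 k * (2 * sigma * V (xs u x0 k)) <= lam * hs u x0 k * W (xs u x0 k)
      by apply: Rmult_le_compat_l => //; nra.
    lra. }
  rewrite hyb_tau_S (_ : - 2 * rate * (tau u x0 k + hs u x0 k) =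
    - 2 * rate * tau u x0 k + - (2 * rate * hs u x0 k)); last ring.
  rewrite exp_plus; have := exp_ineq1_le (- (2 * rate * hs u x0 k)) => Hexp.
  have := exp_pos (- (2 * rate * hs u x0 k)) => Hpos.
  have : V (xs u x0 k) * (1 - 2 * rate * hs u x0 k) <= V (xs u x0 k) * exp (- (2 * rate * hs u x0 k))
    by apply: Rmult_le_compat_l => //; lra.
  have : V (xs u x0 k) * exp (- (2 * rate * hs u x0 k)) <=
         V x0 * exp (- 2 * rate * tau u x0 k) * exp (- (2 * rate * hs u x0 k))
    by apply: Rmult_le_compat_r; lra.
  lra.
Qed.

(** Since V stays nonnegative, a step from a state with V > 0 has length at most 1/(2 sigma lam). *)
Lemma hyb_step_short u x0 i : admissible u -> 0 < V (xs u x0 i) -> hs u x0 i <= / (2 * rate).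
Proof.
  move=> Hu HVi; have := hyb_V_step x0 i Hu; have := W_ge_V (xs u x0 i).
  have := pos_def_nonneg V_pd (xs u x0 i.+1); have [_ [Hh _]] := hyb_grid x0 Hu i => ? ? ?.
  have Hrate : 0 < rate by nra.
  apply: (Rmult_le_reg_l (2 * rate)); first lra.
  rewrite Rinv_r; last lra.
  have HW : lam * hs u x0 i * (2 * sigma * V (xs u x0 i)) <= lam * hs u x0 i * W (xs u x0 i)
    by apply: Rmult_le_compat_l => //; nra.
  suff : 2 * rate * hs u x0 i * V (xs u x0 i) <= 1 * V (xs u x0 i).
    by move/(Rmult_le_reg_r _ _ _ HVi).
  lra.
Qed.

Lemma hyb_norm_exp_decay u x0 k : admissible u ->
  vnorm (xs u x0 k) <= sqrt (V x0) / sqrt K * exp (- rate * tau u x0 k).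
Proof.
  move=> Hu; set E := exp (- rate * tau u x0 k); have HE : 0 < E := exp_pos _.
  have HV0 := pos_def_nonneg V_pd x0; have HsK := sqrt_lt_R0 _ K_pos.
  have Hbound : 0 <= sqrt (V x0) / sqrt K * E.
  { apply: Rmult_le_pos; last lra.
    by apply: Rmult_le_pos; [exact: sqrt_pos | apply: Rlt_le; exact: Rinv_0_lt_compat]. }
  have Hsq : (sqrt (V x0) / sqrt K * E) ^ 2 = V x0 / K * (E * E).
  { rewrite (_ : (sqrt (V x0) / sqrt K * E) ^ 2 =
      (sqrt (V x0) * sqrt (V x0)) / (sqrt K * sqrt K) * (E * E)); last by field; lra.
    by rewrite !sqrt_sqrt //; lra. }
  have Hk : vnorm (xs u x0 k) ^ 2 <= V x0 / K * (E * E).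
  { have := V_ge_quadratic (xs u x0 k); have := hyb_V_exp_decay x0 k Hu.
    rewrite (_ : exp (- 2 * rate * tau u x0 k) = E * E); last by rewrite /E -exp_plus; congr exp; ring.
    move=> ? ?; apply: (Rmult_le_reg_l K) => //.
    by rewrite (_ : K * (V x0 / K * (E * E)) = V x0 * (E * E)); [lra | field; lra]. }
  rewrite -Hsq in Hk; have := vnorm_nonneg (xs u x0 k); nra.
Qed.

(** Robust K-exponential stability with rate sigma lam: between grid points, |x(t)| is
    at most exp(b) |x(tau_i)|, and t - tau_i <= 1/(2 sigma lam) as long as V(x(tau_i)) > 0. *)
Lemma hyb_exp_stable : robust_K_exp_stable phi F.
Proof.
  have Hrate : 0 < rate by nra.
  set c := exp bb * exp (/ 2) / sqrt K.
  have HsK := sqrt_lt_R0 _ K_pos.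
  have Hc : 0 <= c.
    by apply: Rlt_le; apply: Rdiv_lt_0_compat => //; apply: Rmult_lt_0_compat; exact: exp_pos.
  have [a [Ha [Ha0 Hmaj]]] := Kinf_majorant (c := c) V_cont V_pd.1 Hc.
  exists a, rate; do 2!split=> //; move=> u x0 t y Hu Ht Hy.
  have [i [Hti Hyi]] := hyb_at_near_grid Hu bb_nonneg scheme_growth Hy.
  have Hay := Hmaj x0 (pos_def_nonneg V_pd x0).
  have Hexpt := exp_pos (- rate * t).
  case: (Rle_lt_dec (V (xs u x0 i)) 0) => HVi.
  - have Hxi : vnorm (xs u x0 i) = 0.
    { have := V_ge_quadratic (xs u x0 i); rewrite /pow Rmult_1_r => Hq.
      case: (vnorm_nonneg (xs u x0 i)) => // Hpos.
      by have := Rmult_lt_0_compat _ _ (Rmult_lt_0_compat _ _ K_pos Hpos) Hpos; lra. }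
    rewrite Hxi Rmult_0_r in Hyi; have := Ha0 _ (vnorm_nonneg x0); nra.
  - have Hhi := hyb_step_short Hu HVi.
    have HEt : exp (- rate * tau u x0 i) <= exp (- rate * t) * exp (/ 2).
    { rewrite -exp_plus; apply: exp_monotone.
      have : rate * t <= rate * (tau u x0 i + / (2 * rate)) by apply: Rmult_le_compat_l; lra.
      rewrite (_ : rate * (tau u x0 i + / (2 * rate)) = rate * tau u x0 i + / 2); [lra | field; lra]. }
    have Hs0 : 0 <= sqrt (V x0) / sqrt K.
      by apply: Rmult_le_pos; [exact: sqrt_pos | apply: Rlt_le; exact: Rinv_0_lt_compat].
    apply: Rle_trans Hyi _.
    apply: Rle_trans (_ : exp bb * (sqrt (V x0) / sqrt K * (exp (- rate * t) * exp (/ 2))) <= _).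
    + apply: Rmult_le_compat_l; first exact: Rlt_le (exp_pos bb).
      apply: Rle_trans (hyb_norm_exp_decay x0 i Hu) _; exact: Rmult_le_compat_l.
    + rewrite (_ : exp bb * (sqrt (V x0) / sqrt K * (exp (- rate * t) * exp (/ 2))) =
                   exp (- rate * t) * (c * sqrt (V x0))); last by rewrite /c; field; lra.
      apply: Rmult_le_compat_l; lra.
Qed.

End Hybrid.

Unset Implicit Arguments.
Set Strict Implicit.

Theorem theorem4p9 (n s p : nat) (f : vec n -> vec n) (z : R -> vec n -> vec n)
  (a : 'I_s -> 'I_s -> R) (b : 'I_s -> R) (phi : vec n -> R)
  (F : R -> vec n -> vec n) (M : R -> R)
  (V : vec n -> R) (gV : vec n -> vec n) (W : vec n -> R)
  (bb : R) (C : vec n -> R) (lam : R) :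
  (1 <= p)%N ->
  (* standing framework *)
  loc_lipschitz f -> f vzero = vzero -> is_flow f z ->
  \big[Rplus/0]_(i < s) b i = 1 ->
  vcont phi -> (forall x, 0 < phi x) ->
  RK_represents f a b phi F ->
  cont_nonneg M -> nondecr_nonneg M ->
  (forall x h, 0 <= h <= phi x -> vnorm (F h x) <= vnorm x * M (vnorm x)) ->
  (* (i) *)
  lyapunov f V gV -> vcont W -> pos_def W ->
  (forall x h, 0 <= h <= phi x -> V (z h x) <= V x - h * W x) ->
  (* (ii) *)
  0 <= bb ->
  (forall x h, 0 <= h <= phi x ->
     vnorm (z h x) <= exp bb * vnorm x /\
     vnorm (vadd x (vscale h (F h x))) <= exp bb * vnorm x) ->
  (* (iii) *)
  vcont C -> pos_def C ->
  (forall x h, 0 <= h <= phi x ->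
     vnorm (vsub (vsub (z h x) x) (vscale h (F h x))) <= C x * h ^ (p.+1)) ->
  0 < lam < 1 ->
  (forall x m, x <> vzero -> is_lVb gV bb x m ->
     phi x <= Rpower ((1 - lam) * W x / (m * C x)) (/ INR p)) ->
  hyb_complete phi F /\ URGAS phi F /\
  (forall sigma K, 0 < sigma -> 0 < K ->
     (forall x, 2 * sigma * V x <= W x) ->
     (forall x, K * vnorm x ^ 2 <= V x) ->
     robust_K_exp_stable phi F).
Proof.
  move=> Hp _ _ _ _ Hphi_cont Hphi_pos _ _ _ _ [HV_pd [HV_ru [HV_grad [HgV_cont _]]]]
    HW_cont HW_pd Hflow Hbb Hgrowth _ HC_pd Herr [Hlam0 Hlam1] Hrestr.
  have Hdecrease :=
    rk_step_decrease Hp HV_grad HgV_cont HW_pd HC_pd Hflow Hgrowth Herr Hlam1 Hrestr.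
  have HW_nonneg := pos_def_nonneg HW_pd.
  have Hscheme_growth x h (Hh : 0 <= h <= phi x) := (Hgrowth x h Hh).2.
  have HV_cont := gradient_cont HV_grad.
  split; [|split].
  - exact: (hyb_complete_of_decrease Hphi_pos Hlam0 HW_nonneg Hdecrease Hphi_cont HV_ru).
  - exact: (hyb_URGAS Hphi_pos Hlam0 HW_nonneg Hdecrease Hphi_cont HV_ru Hbb Hscheme_growth
      HV_pd HV_cont HW_pd.2 HW_cont).
  - move=> sigma K Hsigma HK HWV HVK.
    exact: (hyb_exp_stable Hphi_pos Hlam0 Hdecrease Hbb Hscheme_growth HV_pd HV_cont
      Hsigma HK HWV HVK).
Qed.
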